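(* Let $\mathcal{A}$ be a Banach algebra with a bounded approximate identity and let $X$ be a Banach $\mathcal{A}$-bimodule. Let $X_1$ be the closed linear span of $\{a\cdot x\cdot b: a,b\in\mathcal{A},x\in X\}$ in $X$. Then for every $n\ge1$, $\mathcal{H}^n_{app}(\mathcal{A},X^* )\cong\mathcal{H}^n_{app}(\mathcal{A},X_1^* )$.
   Context: For a Banach $\mathcal{A}$-bimodule $X$, the dual $X^*$ is a Banach $\mathcal{A}$-bimodule via $\langle x,a\cdot\varphi\rangle=\langle x\cdot a,\varphi\rangle$, $\langle x,\varphi\cdot a\rangle=\langle a\cdot x,\varphi\rangle$. For a Banach $\mathcal{A}$-bimodule $Z$, $\mathcal{BL}^n(\mathcal{A},Z)$ ($n\ge1$) is the space of bounded $n$-linear maps $\mathcal{A}^n\to Z$, $\mathcal{BL}^0(\mathcal{A},Z)=Z$, with Hochschild coboundary $(\delta^nT)(a_1,\dots,a_{n+1})=a_1\cdot T(a_2,\dots,a_{n+1})+\sum_{k=1}^n(-1)^kT(a_1,\dots,a_ka_{k+1},\dots,a_{n+1})+(-1)^{n+1}T(a_1,\dots,a_n)\cdot a_{n+1}$ and $\delta^0(z)(a)=a\cdot z-z\cdot a$. $\mathcal{Z}^n(\mathcal{A},Z)=\ker\delta^n$, $\mathcal{B}^n(\mathcal{A},Z)=\operatorname{ran}\delta^{n-1}$. Strong topology: $T_i\to T$ iff $\|(T_i-T)(a_1,\dots,a_n)\|\to0$ for all $a_j\in\mathcal{A}$. $\mathcal{H}^n_{app}(\mathcal{A},Z)=\mathcal{Z}^n(\mathcal{A},Z)/\overline{\mathcal{B}^n(\mathcal{A},Z)}^{\mathrm{strong}}$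 for $n\ge1$. *)

From Stdlib Require Import Reals.
Open Scope R_scope.

Record C := mkC { Re : R; Im : R }.
Definition C0 : C := mkC 0 0.
Definition C1 : C := mkC 1 0.
Definition Cadd (z w : C) : C := mkC (Re z + Re w) (Im z + Im w).
Definition Copp (z : C) : C := mkC (- Re z) (- Im z).
Definition Csub (z w : C) : C := Cadd z (Copp w).
Definition Cmul (z w : C) : C :=
  mkC (Re z * Re w - Im z * Im w) (Re z * Im w + Im z * Re w).
Definition Cmod (z : C) : R := sqrt (Re z * Re z + Im z * Im z).
Definition Csign (k : nat) : C := mkC ((-1) ^ k) 0.
Fixpoint Csum1 (f : nat -> C) (n : nat) : C :=
  match n with O => C0 | S m => Cadd (Csum1 f m) (f (S m)) end.

Definition directed (I : Type) (le : I -> I -> Prop) : Prop :=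
  inhabited I /\ (forall i, le i i) /\
  (forall i j k, le i j -> le j k -> le i k) /\
  (forall i j, exists k, le i k /\ le j k).

Record BanachSpace := {
  bs_car :> Type;
  bs_zero : bs_car;
  bs_add : bs_car -> bs_car -> bs_car;
  bs_opp : bs_car -> bs_car;
  bs_scal : C -> bs_car -> bs_car;
  bs_norm : bs_car -> R;
  bs_addA : forall u v w, bs_add u (bs_add v w) = bs_add (bs_add u v) w;
  bs_addC : forall u v, bs_add u v = bs_add v u;
  bs_add0 : forall u, bs_add bs_zero u = u;
  bs_addN : forall u, bs_add u (bs_opp u) = bs_zero;
  bs_scalDr : forall c u v, bs_scal c (bs_add u v) = bs_add (bs_scal c u) (bs_scal c v);
  bs_scalDl : forall c d u, bs_scal (Cadd c d) u = bs_add (bs_scal c u) (bs_scal d u);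
  bs_scalA : forall c d u, bs_scal (Cmul c d) u = bs_scal c (bs_scal d u);
  bs_scal1 : forall u, bs_scal C1 u = u;
  bs_norm_ge0 : forall u, 0 <= bs_norm u;
  bs_norm_eq0 : forall u, bs_norm u = 0 -> u = bs_zero;
  bs_normZ : forall c u, bs_norm (bs_scal c u) = Cmod c * bs_norm u;
  bs_normD : forall u v, bs_norm (bs_add u v) <= bs_norm u + bs_norm v;
  bs_complete : forall s : nat -> bs_car,
    (forall eps, eps > 0 -> exists N, forall m k, (N <= m)%nat -> (N <= k)%nat ->
        bs_norm (bs_add (s m) (bs_opp (s k))) < eps) ->
    exists l, forall eps, eps > 0 -> exists N, forall m, (N <= m)%nat ->
        bs_norm (bs_add (s m) (bs_opp l)) < eps
}.
Arguments bs_zero {_}. Arguments bs_add {_}. Arguments bs_opp {_}.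
Arguments bs_scal {_}. Arguments bs_norm {_}.
Definition bs_sub {V : BanachSpace} (u v : V) : V := bs_add u (bs_opp v).

Record BanachAlgebra := {
  ba_space :> BanachSpace;
  ba_mul : ba_space -> ba_space -> ba_space;
  ba_mulA : forall a b c, ba_mul a (ba_mul b c) = ba_mul (ba_mul a b) c;
  ba_mulDl : forall a b c, ba_mul (bs_add a b) c = bs_add (ba_mul a c) (ba_mul b c);
  ba_mulDr : forall a b c, ba_mul a (bs_add b c) = bs_add (ba_mul a b) (ba_mul a c);
  ba_mulZl : forall z a b, ba_mul (bs_scal z a) b = bs_scal z (ba_mul a b);
  ba_mulZr : forall z a b, ba_mul a (bs_scal z b) = bs_scal z (ba_mul a b);
  ba_normM : forall a b, bs_norm (ba_mul a b) <= bs_norm a * bs_norm b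
}.
Arguments ba_mul {_}.

Definition has_bai (A : BanachAlgebra) : Prop :=
  exists (I : Type) (le : I -> I -> Prop) (e : I -> A) (K : R),
    directed I le /\ (forall i, bs_norm (e i) <= K) /\
    forall (a : A) eps, eps > 0 -> exists i0, forall i, le i0 i ->
      bs_norm (bs_sub (ba_mul (e i) a) a) < eps /\
      bs_norm (bs_sub (ba_mul a (e i)) a) < eps.

Record BanachBimodule (A : BanachAlgebra) := {
  bm_space :> BanachSpace;
  lact : A -> bm_space -> bm_space;
  ract : bm_space -> A -> bm_space;
  lact_Dl : forall a b x, lact (bs_add a b) x = bs_add (lact a x) (lact b x);
  lact_Dr : forall a x y, lact a (bs_add x y) = bs_add (lact a x) (lact a y);
  lact_Zl : forall c a x, lact (bs_scal c a) x = bs_scal c (lact a x);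
  lact_Zr : forall c a x, lact a (bs_scal c x) = bs_scal c (lact a x);
  ract_Dl : forall x y a, ract (bs_add x y) a = bs_add (ract x a) (ract y a);
  ract_Dr : forall x a b, ract x (bs_add a b) = bs_add (ract x a) (ract x b);
  ract_Zl : forall c x a, ract (bs_scal c x) a = bs_scal c (ract x a);
  ract_Zr : forall c x a, ract x (bs_scal c a) = bs_scal c (ract x a);
  lact_M : forall a b x, lact (ba_mul a b) x = lact a (lact b x);
  ract_M : forall x a b, ract x (ba_mul a b) = ract (ract x a) b;
  lract : forall a x b, ract (lact a x) b = lact a (ract x b);
  act_bounded : exists K, 0 <= K /\ forall a x,
      bs_norm (lact a x) <= K * bs_norm a * bs_norm x /\
      bs_norm (ract x a) <= K * bs_norm a * bs_norm x
}.
Arguments lact {_ _}. Arguments ract {_ _}.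

Inductive in_span {V : BanachSpace} (S : V -> Prop) : V -> Prop :=
| span_zero : in_span S bs_zero
| span_gen : forall x, S x -> in_span S x
| span_lin : forall c x y, in_span S x -> in_span S y ->
    in_span S (bs_add (bs_scal c x) y).

Definition closed_span {V : BanachSpace} (S : V -> Prop) (x : V) : Prop :=
  forall eps, eps > 0 -> exists y, in_span S y /\ bs_norm (bs_sub x y) < eps.

Definition X1 {A : BanachAlgebra} (X : BanachBimodule A) : X -> Prop :=
  closed_span (fun y => exists (a b : A) (x : X), y = lact a (ract x b)).

(* Let P be (the predicate of) a closed subspace Y of X.  An element of Y^dual
   is represented by a function X -> C, of which only its values on Y matter.
   An n-tuple (a_1,...,a_n) is represented by a sequence a : nat -> A
   (a_k = a (k-1)); an n-cochain only depends on a 0, ..., a (n-1).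
   So a cochain is T : (nat -> A) -> X -> C, T a x = < x, T(a_1,..,a_n) >. *)
Definition Cochain {A : BanachAlgebra} (X : BanachBimodule A) : Type :=
  (nat -> A) -> X -> C.

Definition upd {A : Type} (a : nat -> A) (i : nat) (u : A) : nat -> A :=
  fun j => if Nat.eqb j i then u else a j.

Fixpoint prod_norm {A : BanachAlgebra} (a : nat -> A) (n : nat) : R :=
  match n with O => 1 | S m => prod_norm a m * bs_norm (a m) end.

Definition is_cochain {A : BanachAlgebra} {X : BanachBimodule A}
    (P : X -> Prop) (n : nat) (T : Cochain X) : Prop :=
  (forall a b : nat -> A, (forall i, (i < n)%nat -> a i = b i) ->
      forall x, P x -> T a x = T b x) /\
  (forall a (c : C) (x y : X), P x -> P y ->
      T a (bs_add (bs_scal c x) y) = Cadd (Cmul c (T a x)) (T a y)) /\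
  (forall i, (i < n)%nat -> forall a (c : C) (u v : A) x, P x ->
      T (upd a i (bs_add (bs_scal c u) v)) x
      = Cadd (Cmul c (T (upd a i u) x)) (T (upd a i v) x)) /\
  (exists K, 0 <= K /\ forall a x, P x ->
      Cmod (T a x) <= K * prod_norm a n * bs_norm x).

Definition cadd {A : BanachAlgebra} {X : BanachBimodule A} (T S : Cochain X) : Cochain X :=
  fun a x => Cadd (T a x) (S a x).
Definition cscal {A : BanachAlgebra} {X : BanachBimodule A} (c : C) (T : Cochain X) : Cochain X :=
  fun a x => Cmul c (T a x).
Definition csub {A : BanachAlgebra} {X : BanachBimodule A} (T S : Cochain X) : Cochain X :=
  fun a x => Csub (T a x) (S a x).

(* merging a_k a_{k+1} (1-indexed) in the tuple *)
Definition merge {A : BanachAlgebra} (k : nat) (a : nat -> A) : nat -> A :=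
  fun i => if Nat.ltb i (k - 1)%nat then a i
           else if Nat.eqb i (k - 1)%nat then ba_mul (a (k - 1)%nat) (a k)
           else a (S i).
Definition shift {A : Type} (a : nat -> A) : nat -> A := fun i => a (S i).

(* Hochschild coboundary delta^n for the dual module Y^dual, using
   <x, a.phi> = <x.a, phi>,  <x, phi.a> = <a.x, phi>. *)
Definition delta {A : BanachAlgebra} {X : BanachBimodule A}
    (n : nat) (T : Cochain X) : Cochain X :=
  fun a x =>
    Cadd (Cadd (T (shift a) (ract x (a O)))
               (Csum1 (fun k => Cmul (Csign k) (T (merge k a) x)) n))
         (Cmul (Csign (S n)) (T a (lact (a n) x))).

Definition cocycle {A : BanachAlgebra} {X : BanachBimodule A}
    (P : X -> Prop) (n : nat) (T : Cochain X) : Prop :=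
  is_cochain P n T /\ forall a x, P x -> delta n T a x = C0.

(* B^n = range of delta^{n-1}, for n >= 1 *)
Definition coboundary {A : BanachAlgebra} {X : BanachBimodule A}
    (P : X -> Prop) (n : nat) (T : Cochain X) : Prop :=
  is_cochain P n T /\
  exists S, is_cochain P (pred n) S /\
    forall a x, P x -> delta (pred n) S a x = T a x.

(* closure of B^n in the strong topology of BL^n(A, Y^dual), via nets *)
Definition strong_closure_B {A : BanachAlgebra} {X : BanachBimodule A}
    (P : X -> Prop) (n : nat) (T : Cochain X) : Prop :=
  is_cochain P n T /\
  exists (I : Type) (le : I -> I -> Prop) (S : I -> Cochain X),
    directed I le /\ (forall i, coboundary P n (S i)) /\
    forall a eps, eps > 0 -> exists i0, forall i, le i0 i ->
      forall x, P x -> Cmod (Csub (S i a x) (T a x)) <= eps * bs_norm x.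

(* H^n_app(A, Y1^dual) and H^n_app(A, Y2^dual) are isomorphic (as vector spaces):
   there is a map Phi on cocycles, linear modulo equality in Y2^dual, compatible
   with equality in Y1^dual, such that the induced map
   Z^n(A,Y1^dual)/cl B^n(A,Y1^dual) -> Z^n(A,Y2^dual)/cl B^n(A,Y2^dual)
   is well defined, injective and surjective. *)
Definition Happ_iso {A : BanachAlgebra} {X : BanachBimodule A}
    (P1 P2 : X -> Prop) (n : nat) : Prop :=
  exists Phi : Cochain X -> Cochain X,
    (forall T, cocycle P1 n T -> cocycle P2 n (Phi T)) /\
    (forall T S, cocycle P1 n T -> cocycle P1 n S ->
       (forall a x, P1 x -> T a x = S a x) ->
       forall a x, P2 x -> Phi T a x = Phi S a x) /\
    (forall T S c, cocycle P1 n T -> cocycle P1 n S ->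
       forall a x, P2 x ->
       Phi (cadd (cscal c T) S) a x = Cadd (Cmul c (Phi T a x)) (Phi S a x)) /\
    (forall T, cocycle P1 n T ->
       (strong_closure_B P1 n T <-> strong_closure_B P2 n (Phi T))) /\
    (forall S, cocycle P2 n S ->
       exists T, cocycle P1 n T /\ strong_closure_B P2 n (csub (Phi T) S)).

(* Restriction of cochains from X to its essential part X1 induces the isomorphism.
   Fix a bounded approximate identity (e_j) and an ultrafilter refining the tails
   of its index set.  Limits along it turn a bounded cochain T into the cochains
   T_r(a)(x) = lim T(a)(x e_j) and T_b(a)(x) = lim T(a)(e_j x e_j) on X; since
   e_j asymptotically commutes with A, these limits commute with the coboundary.
   For a cocycle T on X1, T_b is a cocycle on X agreeing with T on X1, which gives
   surjectivity.  For a cocycle T on X in the closure of the coboundaries on X1,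
   write T = (T - T_r) + (T_r - T_b) + T_b.  The first summand vanishes on X.A and
   the second on A.X, and such cocycles are strong limits of the coboundaries
   T(e_j a_1, ..., a_n) resp. T(a_1, ..., a_n e_j); the third is the strong limit
   of the transported coboundaries approximating T on X1. *)

From Stdlib Require Import Reals Lra Lia Psatz Classical ClassicalEpsilon FunctionalExtensionality.
From mathcomp Require ssreflect classical_sets boolp filter.
Open Scope R_scope.

Lemma C_ext (z w : C) : Re z = Re w -> Im z = Im w -> z = w.
Proof. destruct z, w; simpl; intros; subst; reflexivity. Qed.

Lemma C_ring_theory : ring_theory C0 C1 Cadd Cmul Csub Copp (@eq C).
Proof.
  constructor; intros; apply C_ext; unfold Cadd, Cmul, Csub, Copp, C0, C1; simpl; ring.
Qed.
Add Ring C_ring : C_ring_theory.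

Lemma Cmod_ge0 z : 0 <= Cmod z.
Proof. apply sqrt_pos. Qed.

Lemma Cmod_sqr z : Cmod z * Cmod z = Re z * Re z + Im z * Im z.
Proof. unfold Cmod; rewrite sqrt_sqrt; nra. Qed.

Lemma Cmod_le_sqr z r : 0 <= r -> Re z * Re z + Im z * Im z <= r * r -> Cmod z <= r.
Proof. intros Hr H. pose proof (Cmod_ge0 z). rewrite <- Cmod_sqr in H. nra. Qed.

Lemma Cmod_triangle z w : Cmod (Cadd z w) <= Cmod z + Cmod w.
Proof.
  pose proof (Cmod_ge0 z); pose proof (Cmod_ge0 w).
  pose proof (Cmod_sqr z) as Hz; pose proof (Cmod_sqr w) as Hw.
  apply Cmod_le_sqr; [lra|]. unfold Cadd; simpl.
  (* Cauchy-Schwarz in R^2 *)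
  assert (Re z * Re w + Im z * Im w <= Cmod z * Cmod w).
  { destruct (Rle_dec (Re z * Re w + Im z * Im w) 0); [nra|].
    assert ((Re z * Re w + Im z * Im w) * (Re z * Re w + Im z * Im w)
            <= (Cmod z * Cmod z) * (Cmod w * Cmod w)).
    { rewrite Hz, Hw. pose proof (Rle_0_sqr (Re z * Im w - Im z * Re w)). unfold Rsqr in *. nra. }
    assert (0 <= Cmod z * Cmod w) by nra. nra. }
  nra.
Qed.

Lemma Cmod_mul z w : Cmod (Cmul z w) = Cmod z * Cmod w.
Proof. unfold Cmod, Cmul; simpl. rewrite <- sqrt_mult by nra. f_equal. ring. Qed.

Lemma Cmod_Re z : Rabs (Re z) <= Cmod z.
Proof.
  pose proof (Cmod_ge0 z); pose proof (Cmod_sqr z).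
  rewrite <- (Rabs_pos_eq (Cmod z)) by lra. apply Rsqr_le_abs_0. unfold Rsqr. nra.
Qed.

Lemma Cmod_Im z : Rabs (Im z) <= Cmod z.
Proof.
  pose proof (Cmod_ge0 z); pose proof (Cmod_sqr z).
  rewrite <- (Rabs_pos_eq (Cmod z)) by lra. apply Rsqr_le_abs_0. unfold Rsqr. nra.
Qed.

Lemma Cmod_le_Re_Im z : Cmod z <= Rabs (Re z) + Rabs (Im z).
Proof.
  pose proof (Rabs_pos (Re z)); pose proof (Rabs_pos (Im z)).
  apply Cmod_le_sqr; [lra|].
  rewrite <- (Rabs_pos_eq (Re z * Re z)), <- (Rabs_pos_eq (Im z * Im z)) by nra.
  rewrite !Rabs_mult. nra.
Qed.

Lemma Cmod_0 : Cmod C0 = 0.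
Proof. unfold Cmod, C0; simpl. rewrite Rmult_0_l, Rplus_0_l. apply sqrt_0. Qed.

Lemma Cmod_1 : Cmod C1 = 1.
Proof. unfold Cmod, C1; simpl. replace (1 * 1 + 0 * 0) with 1 by ring. apply sqrt_1. Qed.

Lemma Cmod_opp z : Cmod (Copp z) = Cmod z.
Proof. unfold Cmod, Copp; simpl. f_equal; ring. Qed.

Lemma Cmod_eq0 z : (forall eps, eps > 0 -> Cmod z <= eps) -> z = C0.
Proof.
  intros H. pose proof (Cmod_ge0 z).
  assert (Hz : Cmod z = 0) by (destruct (Rle_dec (Cmod z) 0); [lra|specialize (H (Cmod z / 2)); lra]).
  pose proof (Cmod_sqr z) as E. rewrite Hz in E. apply C_ext; simpl; nra.
Qed.

Lemma Cmod_subC z w : Cmod (Csub z w) = Cmod (Csub w z).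
Proof. replace (Csub z w) with (Copp (Csub w z)) by ring. apply Cmod_opp. Qed.

Lemma Cmod_sub_triangle z w u : Cmod (Csub z u) <= Cmod (Csub z w) + Cmod (Csub w u).
Proof. replace (Csub z u) with (Cadd (Csub z w) (Csub w u)) by ring. apply Cmod_triangle. Qed.

Lemma Csign0 : Csign 0 = C1.
Proof. apply C_ext; simpl; ring. Qed.

Lemma CsignS k : Csign (S k) = Copp (Csign k).
Proof. apply C_ext; unfold Csign, Copp; simpl; ring. Qed.

Lemma Csign_sqr k : Cmul (Csign k) (Csign k) = C1.
Proof.
  apply C_ext; unfold Cmul, Csign, C1; simpl; [|ring].
  rewrite <- Rpow_mult_distr. replace (-1 * -1) with 1 by ring. rewrite pow1. ring.
Qed.

Lemma Csum1_ext f g n : (forall k, (1 <= k <= n)%nat -> f k = g k) -> Csum1 f n = Csum1 g n.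
Proof.
  induction n; intros H; simpl; auto.
  rewrite IHn by (intros; apply H; lia). rewrite H by lia. reflexivity.
Qed.

Lemma Csum1_add f g n : Csum1 (fun k => Cadd (f k) (g k)) n = Cadd (Csum1 f n) (Csum1 g n).
Proof. induction n; simpl; [|rewrite IHn]; ring. Qed.

Lemma Csum1_scal c f n : Csum1 (fun k => Cmul c (f k)) n = Cmul c (Csum1 f n).
Proof. induction n; simpl; [|rewrite IHn]; ring. Qed.

Lemma Csum1_zero n : Csum1 (fun _ => C0) n = C0.
Proof. induction n; simpl; [|rewrite IHn]; ring. Qed.

Lemma Csum1_S f m : Csum1 f (S m) = Cadd (f 1%nat) (Csum1 (fun k => f (S k)) m).
Proof. induction m; simpl in *; [|rewrite IHm]; ring. Qed.

Section BanachSpaceFacts.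
Variable V : BanachSpace.
Implicit Types u v w : V.

Lemma bs_addr0 u : bs_add u bs_zero = u.
Proof. rewrite bs_addC; apply bs_add0. Qed.

Lemma bs_addNr u : bs_add (bs_opp u) u = bs_zero.
Proof. rewrite bs_addC; apply bs_addN. Qed.

Lemma bs_addI u v w : bs_add u v = bs_add u w -> v = w.
Proof.
  intros H. rewrite <- (bs_add0 _ v), <- (bs_add0 _ w), <- (bs_addNr u), <- !bs_addA, H.
  reflexivity.
Qed.

Lemma bs_opp_unique u v : bs_add u v = bs_zero -> v = bs_opp u.
Proof. intros H. apply (bs_addI u). rewrite H, bs_addN. reflexivity. Qed.

Lemma bs_scal0 u : bs_scal C0 u = bs_zero.
Proof.
  apply (bs_addI (bs_scal C0 u)). rewrite <- bs_scalDl, bs_addr0.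
  f_equal. ring.
Qed.

Lemma bs_scalN1 u : bs_scal (Copp C1) u = bs_opp u.
Proof.
  apply bs_opp_unique. rewrite <- (bs_scal1 _ u) at 1. rewrite <- bs_scalDl.
  replace (Cadd C1 (Copp C1)) with C0 by ring. apply bs_scal0.
Qed.

Lemma bs_oppK u : bs_opp (bs_opp u) = u.
Proof. symmetry; apply bs_opp_unique, bs_addNr. Qed.

Lemma bs_oppD u v : bs_opp (bs_add u v) = bs_add (bs_opp u) (bs_opp v).
Proof. rewrite <- !bs_scalN1; apply bs_scalDr. Qed.

Lemma bs_norm0 : bs_norm (@bs_zero V) = 0.
Proof. rewrite <- (bs_scal0 bs_zero), bs_normZ, Cmod_0. ring. Qed.

Lemma bs_normN u : bs_norm (bs_opp u) = bs_norm u.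
Proof. rewrite <- bs_scalN1, bs_normZ, Cmod_opp, Cmod_1; ring. Qed.

Lemma bs_subrr u : bs_sub u u = bs_zero.
Proof. apply bs_addN. Qed.

Lemma bs_subKC u v w : bs_add (bs_sub u v) (bs_sub v w) = bs_sub u w.
Proof.
  unfold bs_sub. rewrite <- bs_addA, (bs_addA _ (bs_opp v) v), bs_addNr, bs_add0.
  reflexivity.
Qed.

Lemma bs_oppB u v : bs_opp (bs_sub u v) = bs_sub v u.
Proof. unfold bs_sub. rewrite bs_oppD, bs_oppK, bs_addC. reflexivity. Qed.

Lemma bs_norm_subC u v : bs_norm (bs_sub u v) = bs_norm (bs_sub v u).
Proof. rewrite <- bs_oppB, bs_normN. reflexivity. Qed.

Lemma bs_norm_sub_triangle u v w :
  bs_norm (bs_sub u w) <= bs_norm (bs_sub u v) + bs_norm (bs_sub v w).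
Proof. rewrite <- (bs_subKC u v w). apply bs_normD. Qed.

Lemma bs_subrK u v : bs_add (bs_sub u v) v = u.
Proof. unfold bs_sub. rewrite <- bs_addA, bs_addNr, bs_addr0. reflexivity. Qed.

Lemma bs_sub_lin c u v u' v' :
  bs_sub (bs_add (bs_scal c u) v) (bs_add (bs_scal c u') v') =
  bs_add (bs_scal c (bs_sub u u')) (bs_sub v v').
Proof.
  unfold bs_sub. rewrite bs_oppD, bs_scalDr, <- !bs_scalN1, <- !bs_scalA.
  replace (Cmul c (Copp C1)) with (Cmul (Copp C1) c) by ring.
  rewrite <- !bs_addA. f_equal. rewrite !bs_addA, (bs_addC _ v). reflexivity.
Qed.

Lemma bs_subE u v : bs_sub u v = bs_add (bs_scal (Copp C1) v) u.
Proof. rewrite bs_scalN1, bs_addC. reflexivity. Qed.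

End BanachSpaceFacts.

Section AdditiveMaps.
Variables V W : BanachSpace.
Variable f : V -> W.
Hypothesis f_add : forall u v, f (bs_add u v) = bs_add (f u) (f v).

Lemma additive0 : f bs_zero = bs_zero.
Proof. apply (bs_addI _ (f bs_zero)). rewrite <- f_add, !bs_addr0. reflexivity. Qed.

Lemma additiveB u v : f (bs_sub u v) = bs_sub (f u) (f v).
Proof.
  assert (HN : f (bs_opp v) = bs_opp (f v)).
  { apply bs_opp_unique. rewrite <- f_add, bs_addN. apply additive0. }
  unfold bs_sub. rewrite f_add, HN. reflexivity.
Qed.

End AdditiveMaps.

Section Nets.
Context {I : Type} (le : I -> I -> Prop).

Definition net_null (r : I -> R) : Prop :=
  forall eps, eps > 0 -> exists j0, forall j, le j0 j -> r j < eps.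

Lemma net_null_le {r s : I -> R} (K : R) :
  net_null s -> 0 <= K -> (forall j, r j <= K * s j) -> net_null r.
Proof.
  intros Hs HK Hrs eps Heps.
  assert (Hp : 0 < eps / (K + 1)) by (apply Rdiv_lt_0_compat; lra).
  destruct (Hs _ Hp) as [j0 Hj0]. exists j0. intros j Hj.
  specialize (Hj0 j Hj). specialize (Hrs j).
  assert (K * s j <= K * (eps / (K + 1))) by nra.
  assert (K * (eps / (K + 1)) < eps).
  { replace eps with ((K + 1) * (eps / (K + 1))) at 2 by (field; lra). nra. }
  lra.
Qed.

Lemma net_null_add r s :
  directed I le -> net_null r -> net_null s -> net_null (fun j => r j + s j).
Proof.
  intros [_ [_ [Htr Hd]]] Hr Hs eps Heps.
  destruct (Hr (eps / 2)) as [j1 Hj1]; [lra|]. destruct (Hs (eps / 2)) as [j2 Hj2]; [lra|].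
  destruct (Hd j1 j2) as [j0 [H1 H2]]. exists j0. intros j Hj.
  specialize (Hj1 j (Htr _ _ _ H1 Hj)). specialize (Hj2 j (Htr _ _ _ H2 Hj)). lra.
Qed.

Record ultranet := {
  un_mem :> (I -> Prop) -> Prop;
  un_empty : ~ un_mem (fun _ => False);
  un_mono : forall P Q, un_mem P -> (forall i, P i -> Q i) -> un_mem Q;
  un_and : forall P Q, un_mem P -> un_mem Q -> un_mem (fun i => P i /\ Q i);
  un_ultra : forall P, un_mem P \/ un_mem (fun i => ~ P i);
  un_tail : forall i0, un_mem (le i0)
}.

End Nets.
Arguments un_empty {I le}. Arguments un_mono {I le}. Arguments un_and {I le}.
Arguments un_ultra {I le}. Arguments un_tail {I le}.

Module UltranetExistence.
Import ssreflect classical_sets boolp filter.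

Lemma ultranet_exists {I : Type} (le : I -> I -> Prop) :
  directed I le -> inhabited (ultranet le).
Proof.
move=> [[j0] [refl [trans dir]]].
have FF : Filter (filter_from setT (fun k => (fun i => le k i))).
  apply: filter_fromT_filter; first by exists j0.
  move=> i j; have [k [hik hjk]] := dir i j; exists k => x /= hkx.
  by split; apply: trans hkx.
have PF : ProperFilter (filter_from setT (fun k => (fun i => le k i))).
  apply: filter_from_proper => k _; exists k; exact: refl.
have [G [UG sFG]] := ultraFilterLemma PF.
constructor; exists G.
- by move=> h; apply: (filter_not_empty G); exact h.
- by move=> A B GA AB; apply: filterS GA.
- by move=> A B GA GB; exact: (filterI GA GB).
- by move=> A; exact: in_ultra_setVsetC.
- by move=> j; apply: sFG; exists j.
Qed.

End UltranetExistence.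

Section UltranetLimits.
Context {I : Type} {le : I -> I -> Prop}.
Variable U : ultranet le.

Lemma un_full : U (fun _ => True).
Proof.
  destruct (un_ultra U (fun _ => False)) as [H|H].
  - exfalso; exact (un_empty U H).
  - apply (un_mono U _ _ H); auto.
Qed.

Lemma un_witness P : U P -> exists j, P j.
Proof.
  intros H. apply NNPP; intros Hn. apply (un_empty U).
  apply (un_mono U P); auto. intros j Pj; apply Hn; exists j; auto.
Qed.

Definition ucvg (f : I -> C) (L : C) : Prop :=
  forall eps, eps > 0 -> U (fun j => Cmod (Csub (f j) L) < eps).

Definition ulim (f : I -> C) : C := epsilon (inhabits C0) (ucvg f).

Lemma ucvg_real (f : I -> R) B : (forall j, Rabs (f j) <= B) ->
  exists L, forall eps, eps > 0 -> U (fun j => Rabs (f j - L) < eps).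
Proof.
  intros HB.
  (* [L] is the supremum of the [r] such that [r <= f j] for U-almost all [j]. *)
  set (E := fun r => U (fun j => r <= f j)).
  assert (Hbound : bound E).
  { exists (B + 1). intros r Hr. destruct (Rle_dec r (B + 1)); auto.
    exfalso. apply (un_empty U). apply (un_mono U _ _ Hr). intros j Hj.
    specialize (HB j). pose proof (Rle_abs (f j)). lra. }
  assert (Hne : exists r, E r).
  { exists (- B). apply (un_mono U _ _ un_full). intros j _.
    specialize (HB j). pose proof (Rle_abs (- f j)). rewrite Rabs_Ropp in *. lra. }
  destruct (completeness E Hbound Hne) as [L [Hub Hlub]].
  exists L. intros eps Heps.
  assert (Hupper : U (fun j => f j < L + eps)).
  { destruct (un_ultra U (fun j => f j < L + eps)) as [H|H]; auto.
    exfalso. assert (E (L + eps)) by (apply (un_mono U _ _ H); intros j Hj; lra).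
    specialize (Hub _ H0). lra. }
  assert (Hlower : U (fun j => L - eps < f j)).
  { destruct (classic (exists r, E r /\ L - eps < r)) as [[r [Er Hr]]|Hn].
    - apply (un_mono U _ _ Er). intros j Hj. lra.
    - exfalso. assert (L <= L - eps); [|lra].
      apply Hlub. intros r Er. destruct (Rle_dec r (L - eps)); auto.
      exfalso; apply Hn; exists r; split; auto; lra. }
  apply (un_mono U _ _ (un_and U _ _ Hupper Hlower)).
  intros j [H1 H2]. apply Rabs_def1; lra.
Qed.

Lemma ucvg_exists f B : (forall j, Cmod (f j) <= B) -> exists L, ucvg f L.
Proof.
  intros HB.
  destruct (ucvg_real (fun j => Re (f j)) B) as [Lr Hr].
  { intros j. eapply Rle_trans; [apply Cmod_Re|apply HB]. }
  destruct (ucvg_real (fun j => Im (f j)) B) as [Li Hi].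
  { intros j. eapply Rle_trans; [apply Cmod_Im|apply HB]. }
  exists (mkC Lr Li). intros eps Heps.
  apply (un_mono U _ _ (un_and U _ _ (Hr (eps / 2) ltac:(lra)) (Hi (eps / 2) ltac:(lra)))).
  intros j [H1 H2]. eapply Rle_lt_trans; [apply Cmod_le_Re_Im|].
  unfold Csub, Cadd, Copp; simpl. unfold Rminus in H1, H2. lra.
Qed.

Lemma ucvg_unique f L M : ucvg f L -> ucvg f M -> L = M.
Proof.
  intros HL HM.
  assert (Csub L M = C0).
  { apply Cmod_eq0. intros eps Heps.
    destruct (un_witness _ (un_and U _ _ (HL (eps / 2) ltac:(lra)) (HM (eps / 2) ltac:(lra))))
      as [j [H1 H2]].
    pose proof (Cmod_sub_triangle L (f j) M). pose proof (Cmod_subC L (f j)). lra. }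
  replace L with (Cadd (Csub L M) M) by ring. rewrite H. ring.
Qed.

Lemma ulim_ucvg f B : (forall j, Cmod (f j) <= B) -> ucvg f (ulim f).
Proof. intros HB. unfold ulim. apply epsilon_spec. eapply ucvg_exists; eauto. Qed.

Lemma ulim_eq f L : ucvg f L -> ulim f = L.
Proof. intros H. apply (ucvg_unique f); auto. unfold ulim. apply epsilon_spec. exists L; auto. Qed.

Lemma ucvg_const c : ucvg (fun _ => c) c.
Proof.
  intros eps Heps. apply (un_mono U _ _ un_full). intros.
  replace (Csub c c) with C0 by ring. rewrite Cmod_0; lra.
Qed.

Lemma ucvg_add f g L M :
  ucvg f L -> ucvg g M -> ucvg (fun j => Cadd (f j) (g j)) (Cadd L M).
Proof.
  intros Hf Hg eps Heps.
  apply (un_mono U _ _ (un_and U _ _ (Hf (eps / 2) ltac:(lra)) (Hg (eps / 2) ltac:(lra)))).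
  intros j [H1 H2].
  replace (Csub (Cadd (f j) (g j)) (Cadd L M)) with (Cadd (Csub (f j) L) (Csub (g j) M)) by ring.
  eapply Rle_lt_trans; [apply Cmod_triangle|lra].
Qed.

Lemma ucvg_scal c f L : ucvg f L -> ucvg (fun j => Cmul c (f j)) (Cmul c L).
Proof.
  intros Hf eps Heps. pose proof (Cmod_ge0 c).
  assert (Hp : 0 < eps / (Cmod c + 1)) by (apply Rdiv_lt_0_compat; lra).
  apply (un_mono U _ _ (Hf _ Hp)). intros j Hj.
  replace (Csub (Cmul c (f j)) (Cmul c L)) with (Cmul c (Csub (f j) L)) by ring.
  rewrite Cmod_mul. pose proof (Cmod_ge0 (Csub (f j) L)).
  apply Rle_lt_trans with (Cmod c * (eps / (Cmod c + 1))); [nra|].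
  replace eps with ((Cmod c + 1) * (eps / (Cmod c + 1))) at 2 by (field; lra). nra.
Qed.

Lemma ucvg_ext f g L : (forall j, f j = g j) -> ucvg f L -> ucvg g L.
Proof. intros E H eps Heps. apply (un_mono U _ _ (H eps Heps)). intros j; rewrite E; auto. Qed.

Lemma ucvg_Csum1 (F : nat -> I -> C) (L : nat -> C) m :
  (forall k, ucvg (F k) (L k)) -> ucvg (fun j => Csum1 (fun k => F k j) m) (Csum1 L m).
Proof. intros H. induction m; simpl; [apply ucvg_const|apply ucvg_add; auto]. Qed.

Lemma ucvg_net_null f g L :
  ucvg f L -> net_null le (fun j => Cmod (Csub (g j) (f j))) -> ucvg g L.
Proof.
  intros H Hgf eps Heps.
  destruct (Hgf (eps / 2)) as [j0 Hj0]; [lra|].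
  apply (un_mono U _ _ (un_and U _ _ (H (eps / 2) ltac:(lra)) (un_tail U j0))).
  intros j [H1 H2]. specialize (Hj0 j H2).
  pose proof (Cmod_sub_triangle (g j) (f j) L). lra.
Qed.

Lemma ucvg_Cmod_le f L B : ucvg f L -> (forall j, Cmod (f j) <= B) -> Cmod L <= B.
Proof.
  intros H HB. destruct (Rle_dec (Cmod L) B) as [|Hn]; auto. exfalso.
  destruct (un_witness _ (H (Cmod L - B) ltac:(lra))) as [j Hj].
  specialize (HB j). pose proof (Cmod_sub_triangle L (f j) C0).
  replace (Csub L C0) with L in H0 by ring. replace (Csub (f j) C0) with (f j) in H0 by ring.
  rewrite Cmod_subC in H0. lra.
Qed.

End UltranetLimits.

Section BimoduleFacts.
Context {A : BanachAlgebra} {X : BanachBimodule A}.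

Lemma lact_subr a (x y : X) : lact a (bs_sub x y) = bs_sub (lact a x) (lact a y).
Proof. apply (additiveB _ _ (lact a)). intros; apply lact_Dr. Qed.

Lemma lact_subl (a b : A) (x : X) : lact (bs_sub a b) x = bs_sub (lact a x) (lact b x).
Proof. apply (additiveB _ _ (fun a => lact a x)). intros; apply lact_Dl. Qed.

Lemma ract_subr (x : X) (a b : A) : ract x (bs_sub a b) = bs_sub (ract x a) (ract x b).
Proof. apply (additiveB _ _ (ract x)). intros; apply ract_Dr. Qed.

Definition is_submodule (P : X -> Prop) : Prop :=
  P bs_zero /\ (forall c x y, P x -> P y -> P (bs_add (bs_scal c x) y)) /\
  (forall a x, P x -> P (lact a x)) /\ (forall x a, P x -> P (ract x a)).

Lemma is_submodule_True : is_submodule (fun _ => True).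
Proof. repeat split. Qed.

Lemma is_submodule_sub P x y : is_submodule P -> P x -> P y -> P (bs_sub x y).
Proof. intros [_ [Hlin _]] Hx Hy. rewrite bs_subE. apply Hlin; auto. Qed.

Definition bimod_products (y : X) : Prop := exists (a b : A) (x : X), y = lact a (ract x b).

Lemma closed_span_span (S : X -> Prop) x : in_span S x -> closed_span S x.
Proof. intros H eps Heps. exists x; split; auto. rewrite bs_subrr, bs_norm0; lra. Qed.

Lemma closed_span_lin (S : X -> Prop) c x y :
  closed_span S x -> closed_span S y -> closed_span S (bs_add (bs_scal c x) y).
Proof.
  intros Hx Hy eps Heps. pose proof (Cmod_ge0 c).
  destruct (Hx (eps / (2 * (Cmod c + 1)))) as [x' [Hx' Nx]]; [apply Rdiv_lt_0_compat; lra|].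
  destruct (Hy (eps / 2)) as [y' [Hy' Ny]]; [lra|].
  exists (bs_add (bs_scal c x') y'). split; [apply span_lin; auto|].
  rewrite bs_sub_lin. eapply Rle_lt_trans; [apply bs_normD|]. rewrite bs_normZ.
  assert (Cmod c * bs_norm (bs_sub x x') <= (Cmod c + 1) * (eps / (2 * (Cmod c + 1)))).
  { pose proof (bs_norm_ge0 _ (bs_sub x x')). nra. }
  replace ((Cmod c + 1) * (eps / (2 * (Cmod c + 1)))) with (eps / 2) in H0 by (field; lra).
  lra.
Qed.

Lemma closed_span_map (S : X -> Prop) (f : X -> X) (K : R) :
  0 <= K ->
  (forall c x y, f (bs_add (bs_scal c x) y) = bs_add (bs_scal c (f x)) (f y)) ->
  (forall x, bs_norm (f x) <= K * bs_norm x) ->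
  (forall x, S x -> S (f x)) ->
  forall x, closed_span S x -> closed_span S (f x).
Proof.
  intros HK Hlin Hb HS.
  assert (Hadd : forall x y, f (bs_add x y) = bs_add (f x) (f y)).
  { intros x y. rewrite <- (bs_scal1 _ x), Hlin, !bs_scal1. reflexivity. }
  assert (Hspan : forall x, in_span S x -> in_span S (f x)).
  { induction 1.
    - rewrite (additive0 _ _ f Hadd). apply span_zero.
    - apply span_gen; auto.
    - rewrite Hlin. apply span_lin; auto. }
  intros x Hx eps Heps.
  destruct (Hx (eps / (K + 1))) as [y [Hy Ny]]; [apply Rdiv_lt_0_compat; lra|].
  exists (f y). split; [apply Hspan; auto|].
  rewrite <- (additiveB _ _ f Hadd).
  eapply Rle_lt_trans; [apply Hb|].
  pose proof (bs_norm_ge0 _ (bs_sub x y)).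
  apply Rle_lt_trans with (K * (eps / (K + 1))); [nra|].
  replace eps with ((K + 1) * (eps / (K + 1))) at 2 by (field; lra).
  assert (0 < eps / (K + 1)) by (apply Rdiv_lt_0_compat; lra). nra.
Qed.

Lemma X1_product (a b : A) (x : X) : X1 X (lact a (ract x b)).
Proof. apply closed_span_span, span_gen. exists a, b, x; reflexivity. Qed.

Lemma X1_submodule : is_submodule (X1 X).
Proof.
  destruct (act_bounded A X) as [K [HK Hb]].
  split; [|split; [|split]].
  - apply closed_span_span, span_zero.
  - intros; apply closed_span_lin; auto.
  - intros a x Hx.
    apply (closed_span_map _ (lact a) (K * bs_norm a)); auto.
    + pose proof (bs_norm_ge0 _ a); nra.
    + intros; rewrite lact_Dr, lact_Zr; reflexivity.
    + intros y; apply Hb.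
    + intros y [a' [b' [z ->]]]. exists (ba_mul a a'), b', z. rewrite lact_M; reflexivity.
  - intros x a Hx.
    apply (closed_span_map _ (fun y => ract y a) (K * bs_norm a)); auto.
    + pose proof (bs_norm_ge0 _ a); nra.
    + intros; rewrite ract_Dl, ract_Zl; reflexivity.
    + intros y; apply Hb.
    + intros y [a' [b' [z ->]]]. exists a', (ba_mul b' a), z. rewrite lract, ract_M; reflexivity.
Qed.

End BimoduleFacts.
Arguments X1_submodule {A} X.

Definition ccons {T : Type} (e : T) (a : nat -> T) : nat -> T :=
  fun i => match i with O => e | S i => a i end.

Ltac natcase :=
  repeat match goal with
  | |- context [Nat.ltb ?x ?y] => destruct (Nat.ltb_spec x y)
  | |- context [Nat.eqb ?x ?y] => destruct (Nat.eqb_spec x y)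
  end;
  try (exfalso; lia);
  try reflexivity;
  try solve [f_equal; lia | f_equal; f_equal; lia | f_equal; [f_equal; lia|f_equal; lia]].

Section Tuples.
Context {T : Type}.

Lemma upd_id (a : nat -> T) i : upd a i (a i) = a.
Proof. apply functional_extensionality; intros j. unfold upd. natcase. Qed.

Lemma upd_eq (a : nat -> T) i u : upd a i u i = u.
Proof. unfold upd. rewrite Nat.eqb_refl. reflexivity. Qed.

Lemma upd_upd (a : nat -> T) i u v : upd (upd a i u) i v = upd a i v.
Proof. apply functional_extensionality; intros j. unfold upd. natcase. Qed.

Lemma upd_updC (a : nat -> T) i j u v : i <> j -> upd (upd a i u) j v = upd (upd a j v) i u.
Proof. intros H. apply functional_extensionality; intros k. unfold upd. natcase. Qed.

Lemma ccons_upd (e : T) a i u : ccons e (upd a i u) = upd (ccons e a) (S i) u.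
Proof. apply functional_extensionality; intros [|j]; reflexivity. Qed.

End Tuples.

Section ProdNorm.
Context {A : BanachAlgebra}.

Lemma prod_norm_ge0 (a : nat -> A) n : 0 <= prod_norm a n.
Proof. induction n; simpl; [lra|]. pose proof (bs_norm_ge0 _ (a n)). nra. Qed.

Lemma prod_norm_ext (a b : nat -> A) n :
  (forall i, (i < n)%nat -> a i = b i) -> prod_norm a n = prod_norm b n.
Proof.
  induction n; intros H; simpl; auto.
  rewrite IHn by (intros; apply H; lia). rewrite H by lia. reflexivity.
Qed.

Lemma prod_norm_upd (a : nat -> A) n i : (i < n)%nat ->
  exists Q, 0 <= Q /\ forall u, prod_norm (upd a i u) n = Q * bs_norm u.
Proof.
  induction n; intros Hi; [lia|].
  destruct (Nat.eq_dec i n) as [->|Hne].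
  - exists (prod_norm a n). split; [apply prod_norm_ge0|]. intros u. simpl.
    rewrite upd_eq, (prod_norm_ext (upd a n u) a); [reflexivity|].
    intros j Hj. unfold upd. natcase.
  - destruct (IHn ltac:(lia)) as [Q [HQ HQe]].
    exists (Q * bs_norm (a n)). split; [pose proof (bs_norm_ge0 _ (a n)); nra|].
    intros u; simpl. rewrite HQe. unfold upd. natcase. ring.
Qed.

Lemma prod_norm_ccons (e : A) a m : prod_norm (ccons e a) (S m) = bs_norm e * prod_norm a m.
Proof. induction m; simpl in *; [|rewrite IHm]; ring. Qed.

End ProdNorm.

Section Cochains.
Context {A : BanachAlgebra} {X : BanachBimodule A}.
Variable P : X -> Prop.
Implicit Types T S : Cochain X.

Lemma is_cochain_weaken (P' : X -> Prop) n T :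
  (forall x, P' x -> P x) -> is_cochain P n T -> is_cochain P' n T.
Proof.
  intros Hw [H1 [H2 [H3 [K [HK H4]]]]]. repeat split; intros; auto.
  exists K; split; auto.
Qed.

Lemma is_cochain_zero n : is_cochain P n (fun _ _ => C0).
Proof.
  split; [|split; [|split]]; intros; try ring; auto.
  exists 0. split; [lra|]. intros. rewrite Cmod_0. lra.
Qed.

Lemma is_cochain_lin n c T S : is_cochain P n T -> is_cochain P n S ->
  is_cochain P n (fun a x => Cadd (Cmul c (T a x)) (S a x)).
Proof.
  intros [H1 [H2 [H3 [K [HK H4]]]]] [G1 [G2 [G3 [K' [HK' G4]]]]].
  split; [|split; [|split]].
  - intros a b Hab x Hx. rewrite (H1 a b), (G1 a b); auto.
  - intros a d x y Hx Hy. rewrite H2, G2 by auto. ring.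
  - intros i Hi a d u v x Hx. rewrite H3, G3 by auto. ring.
  - exists (Cmod c * K + K'). pose proof (Cmod_ge0 c). split; [nra|].
    intros a x Hx. eapply Rle_trans; [apply Cmod_triangle|]. rewrite Cmod_mul.
    specialize (H4 a x Hx). specialize (G4 a x Hx).
    pose proof (prod_norm_ge0 a n). pose proof (bs_norm_ge0 _ x). nra.
Qed.

Lemma is_cochain_scal n c T : is_cochain P n T -> is_cochain P n (fun a x => Cmul c (T a x)).
Proof.
  intros [H1 [H2 [H3 [K [HK H4]]]]]. split; [|split; [|split]].
  - intros a b Hab x Hx. rewrite (H1 a b); auto.
  - intros a d x y Hx Hy. rewrite H2 by auto. ring.
  - intros i Hi a d u v x Hx. rewrite H3 by auto. ring.
  - exists (Cmod c * K). pose proof (Cmod_ge0 c). split; [nra|].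
    intros a x Hx. rewrite Cmod_mul. specialize (H4 a x Hx).
    pose proof (prod_norm_ge0 a n). pose proof (bs_norm_ge0 _ x). nra.
Qed.

Lemma is_cochain_upd_map n T i (phi : A -> A) L :
  is_cochain P n T -> (i < n)%nat -> 0 <= L ->
  (forall c u v, phi (bs_add (bs_scal c u) v) = bs_add (bs_scal c (phi u)) (phi v)) ->
  (forall u, bs_norm (phi u) <= L * bs_norm u) ->
  is_cochain P n (fun a x => T (upd a i (phi (a i))) x).
Proof.
  intros [H1 [H2 [H3 [K [HK H4]]]]] Hi HL Hphi Hb.
  split; [|split; [|split]].
  - intros a b Hab x Hx. apply H1; auto. intros j Hj. unfold upd. natcase; subst; rewrite Hab; auto.
  - intros; apply H2; auto.
  - intros i' Hi' a c u v x Hx.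
    destruct (Nat.eq_dec i' i) as [->|Hne].
    + rewrite !upd_eq, !upd_upd, Hphi. apply H3; auto.
    + assert (E : forall w, upd a i' w i = a i) by (intros; unfold upd; natcase).
      rewrite !E, !(upd_updC _ i' i) by auto. apply H3; auto.
  - exists (K * L). split; [nra|]. intros a x Hx.
    eapply Rle_trans; [apply H4; auto|].
    destruct (prod_norm_upd a n i Hi) as [Q [HQ HQe]].
    rewrite HQe. rewrite <- (upd_id a i) at 2. rewrite HQe.
    pose proof (Hb (a i)). pose proof (bs_norm_ge0 _ x). pose proof (bs_norm_ge0 _ (a i)).
    assert (K * (Q * bs_norm (phi (a i))) <= K * (Q * (L * bs_norm (a i)))).
    { apply Rmult_le_compat_l; auto. apply Rmult_le_compat_l; auto. }
    nra.
Qed.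

Lemma is_cochain_ccons m T (e : A) :
  is_cochain P (S m) T -> is_cochain P m (fun a x => T (ccons e a) x).
Proof.
  intros [H1 [H2 [H3 [K [HK H4]]]]]. split; [|split; [|split]].
  - intros a b Hab x Hx. apply H1; auto. intros [|j] Hj; simpl; auto. apply Hab; lia.
  - intros; apply H2; auto.
  - intros i Hi a c u v x Hx. rewrite !ccons_upd. apply H3; auto. lia.
  - exists (K * bs_norm e). split; [pose proof (bs_norm_ge0 _ e); nra|].
    intros a x Hx. eapply Rle_trans; [apply H4; auto|]. rewrite prod_norm_ccons. nra.
Qed.

Lemma is_cochain_upd_last m T (e : A) :
  is_cochain P (S m) T -> is_cochain P m (fun a x => T (upd a m e) x).
Proof.
  intros [H1 [H2 [H3 [K [HK H4]]]]]. split; [|split; [|split]].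
  - intros a b Hab x Hx. apply H1; auto. intros j Hj. unfold upd. natcase. apply Hab; lia.
  - intros; apply H2; auto.
  - intros i Hi a c u v x Hx. rewrite !(upd_updC _ i m) by lia. apply H3; auto.
  - exists (K * bs_norm e). split; [pose proof (bs_norm_ge0 _ e); nra|].
    intros a x Hx. eapply Rle_trans; [apply H4; auto|]. simpl.
    rewrite upd_eq, (prod_norm_ext (upd a m e) a) by (intros j Hj; unfold upd; natcase).
    pose proof (prod_norm_ge0 a m). pose proof (bs_norm_ge0 _ x). nra.
Qed.

Lemma cochain_upd_split n T i a u v x : is_cochain P n T -> (i < n)%nat -> P x ->
  T (upd a i v) x = Cadd (T (upd a i u) x) (T (upd a i (bs_sub v u)) x).
Proof.
  intros [_ [_ [H3 _]]] Hi Hx.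
  replace (T (upd a i u) x) with (Cmul C1 (T (upd a i u) x)) by ring.
  rewrite <- H3 by auto. rewrite bs_scal1, bs_addC, bs_subrK. reflexivity.
Qed.

Hypothesis HP : is_submodule P.

Lemma is_cochain_ext n T S :
  (forall a x, P x -> T a x = S a x) -> is_cochain P n T -> is_cochain P n S.
Proof.
  intros E [H1 [H2 [H3 [K [HK H4]]]]]. destruct HP as [_ [Hlin _]].
  split; [|split; [|split]].
  - intros a b Hab x Hx. rewrite <- !E by auto. apply H1; auto.
  - intros a c x y Hx Hy. rewrite <- !E by auto. apply H2; auto.
  - intros i Hi a c u v x Hx. rewrite <- !E by auto. apply H3; auto.
  - exists K; split; auto. intros a x Hx. rewrite <- E by auto. apply H4; auto.
Qed.

Lemma is_cochain_add n T S :
  is_cochain P n T -> is_cochain P n S -> is_cochain P n (cadd T S).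
Proof.
  intros HT HS. apply (is_cochain_ext n (fun a x => Cadd (Cmul C1 (T a x)) (S a x))).
  - intros; unfold cadd; ring.
  - apply is_cochain_lin; auto.
Qed.

Lemma cochain0 n T a : is_cochain P n T -> T a bs_zero = C0.
Proof.
  intros [_ [H2 _]]. destruct HP as [H0 _].
  pose proof (H2 a C1 bs_zero bs_zero H0 H0) as H. rewrite bs_scal1, bs_add0 in H.
  transitivity (Csub (Cadd (Cmul C1 (T a bs_zero)) (T a bs_zero)) (T a bs_zero)); [ring|].
  rewrite <- H. ring.
Qed.

Lemma cochainB n T a u v : is_cochain P n T -> P u -> P v ->
  T a (bs_sub u v) = Csub (T a u) (T a v).
Proof. intros [_ [H2 _]] Hu Hv. rewrite bs_subE, H2 by auto. ring. Qed.

Lemma cochain_lipschitz n T : is_cochain P n T -> exists K, 0 <= K /\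
  forall a u v, P u -> P v ->
    Cmod (Csub (T a u) (T a v)) <= K * prod_norm a n * bs_norm (bs_sub u v).
Proof.
  intros HT. pose proof HT as [_ [_ [_ [K [HK Hb]]]]]. exists K; split; auto.
  intros a u v Hu Hv. rewrite <- (cochainB n); auto. apply Hb. apply is_submodule_sub; auto.
Qed.

Lemma cochain_net_null {I : Type} (le : I -> I -> Prop) n T a (u v : I -> X) :
  is_cochain P n T -> (forall j, P (u j)) -> (forall j, P (v j)) ->
  net_null le (fun j => bs_norm (bs_sub (u j) (v j))) ->
  net_null le (fun j => Cmod (Csub (T a (u j)) (T a (v j)))).
Proof.
  intros HT Hu Hv Huv. destruct (cochain_lipschitz n T HT) as [K [HK Hb]].
  apply (net_null_le le (K * prod_norm a n) Huv); [pose proof (prod_norm_ge0 a n); nra|].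
  intros j. apply Hb; auto.
Qed.

End Cochains.

Lemma delta_lin {A : BanachAlgebra} {X : BanachBimodule A} n (T S : Cochain X) c a x :
  delta n (fun a x => Cadd (Cmul c (T a x)) (S a x)) a x
  = Cadd (Cmul c (delta n T a x)) (delta n S a x).
Proof.
  unfold delta.
  rewrite (Csum1_ext _ (fun k => Cadd (Cmul c (Cmul (Csign k) (T (merge k a) x)))
                                      (Cmul (Csign k) (S (merge k a) x)))) by (intros; ring).
  rewrite Csum1_add, Csum1_scal. ring.
Qed.

Lemma delta_zero {A : BanachAlgebra} {X : BanachBimodule A} n a (x : X) :
  delta n (fun _ _ => C0) a x = C0.
Proof.
  unfold delta. rewrite (Csum1_ext _ (fun _ => C0)) by (intros; ring).
  rewrite Csum1_zero. ring.
Qed.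

Lemma directed_prod I J (leI : I -> I -> Prop) (leJ : J -> J -> Prop) :
  directed I leI -> directed J leJ ->
  directed (I * J) (fun p q => leI (fst p) (fst q) /\ leJ (snd p) (snd q)).
Proof.
  intros [[i0] [rI [tI dI]]] [[j0] [rJ [tJ dJ]]].
  split; [constructor; exact (i0, j0)|]. split; [intros [p q]; simpl; auto|].
  split; [intros [p1 p2] [q1 q2] [s1 s2]; simpl; intros [] []; eauto|].
  intros [p1 p2] [q1 q2]. destruct (dI p1 q1) as [k1 [? ?]]. destruct (dJ p2 q2) as [k2 [? ?]].
  exists (k1, k2); simpl; auto.
Qed.

Section StrongClosure.
Context {A : BanachAlgebra} {X : BanachBimodule A}.
Variable P : X -> Prop.
Implicit Types T S : Cochain X.

Lemma coboundary_weaken (P' : X -> Prop) n T :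
  (forall x, P' x -> P x) -> coboundary P n T -> coboundary P' n T.
Proof.
  intros Hw [HT [S [HS HdS]]]. split; [eapply is_cochain_weaken; eauto|].
  exists S; split; [eapply is_cochain_weaken; eauto|]. intros; apply HdS; auto.
Qed.

Lemma cocycle_weaken (P' : X -> Prop) n T :
  (forall x, P' x -> P x) -> cocycle P n T -> cocycle P' n T.
Proof. intros Hw [HT Hd]. split; [eapply is_cochain_weaken; eauto|auto]. Qed.

Lemma strong_closure_B_weaken (P' : X -> Prop) n T :
  (forall x, P' x -> P x) -> strong_closure_B P n T -> strong_closure_B P' n T.
Proof.
  intros Hw [HT [I [le [S [Hd [HS Hc]]]]]]. split; [eapply is_cochain_weaken; eauto|].
  exists I, le, S. split; auto. split; [intros i; eapply coboundary_weaken; eauto|].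
  intros a eps Heps. destruct (Hc a eps Heps) as [i0 Hi0]. exists i0. intros; apply Hi0; auto.
Qed.

Lemma strong_closure_B_vanishing n T :
  is_cochain P n T -> (forall a x, P x -> T a x = C0) -> strong_closure_B P n T.
Proof.
  intros HT Hz. split; auto.
  exists unit, (fun _ _ => True), (fun _ _ _ => C0).
  split; [split; [constructor; exact tt|repeat split; intros; exists tt; auto]|].
  split.
  - intros _. split; [apply is_cochain_zero|].
    exists (fun _ _ => C0). split; [apply is_cochain_zero|]. intros; apply delta_zero.
  - intros a eps Heps. exists tt. intros _ _ x Hx. rewrite Hz by auto.
    replace (Csub C0 C0) with C0 by ring. rewrite Cmod_0. pose proof (bs_norm_ge0 _ x). nra.
Qed.

Lemma cocycle_lin n c T S : cocycle P n T -> cocycle P n S ->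
  cocycle P n (fun a x => Cadd (Cmul c (T a x)) (S a x)).
Proof.
  intros [HT HdT] [HS HdS]. split; [apply is_cochain_lin; auto|].
  intros a x Hx. rewrite delta_lin, HdT, HdS by auto. ring.
Qed.

Hypothesis HP : is_submodule P.

Lemma strong_closure_B_ext n T S :
  (forall a x, P x -> T a x = S a x) -> strong_closure_B P n T -> strong_closure_B P n S.
Proof.
  intros E [HT [I [le [F [Hd [HF Hc]]]]]]. split; [eapply (is_cochain_ext P HP); eauto|].
  exists I, le, F. split; auto. split; auto.
  intros a eps Heps. destruct (Hc a eps Heps) as [i0 Hi0]. exists i0. intros i Hi x Hx.
  rewrite <- E by auto. apply Hi0; auto.
Qed.

Lemma coboundary_add n T S : coboundary P n T -> coboundary P n S -> coboundary P n (cadd T S).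
Proof.
  intros [HT [R [HR HdR]]] [HS [R' [HR' HdR']]].
  split; [apply is_cochain_add; auto|].
  exists (fun a x => Cadd (Cmul C1 (R a x)) (R' a x)). split; [apply is_cochain_lin; auto|].
  intros a x Hx. rewrite delta_lin, HdR, HdR' by auto. unfold cadd; ring.
Qed.

Lemma strong_closure_B_add n T S :
  strong_closure_B P n T -> strong_closure_B P n S -> strong_closure_B P n (cadd T S).
Proof.
  intros [HT [I1 [le1 [F1 [Hd1 [HF1 Hc1]]]]]] [HS [I2 [le2 [F2 [Hd2 [HF2 Hc2]]]]]].
  split; [apply is_cochain_add; auto|].
  exists (I1 * I2)%type, (fun p q => le1 (fst p) (fst q) /\ le2 (snd p) (snd q)),
    (fun p => cadd (F1 (fst p)) (F2 (snd p))).
  split; [apply directed_prod; auto|].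
  split; [intros [p q]; apply coboundary_add; auto|].
  intros a eps Heps.
  destruct (Hc1 a (eps / 2)) as [j1 Hj1]; [lra|]. destruct (Hc2 a (eps / 2)) as [j2 Hj2]; [lra|].
  exists (j1, j2). intros [p q] [Hp Hq] x Hx; simpl in *.
  specialize (Hj1 p Hp x Hx). specialize (Hj2 q Hq x Hx). unfold cadd.
  replace (Csub (Cadd (F1 p a x) (F2 q a x)) (Cadd (T a x) (S a x))) with
    (Cadd (Csub (F1 p a x) (T a x)) (Csub (F2 q a x) (S a x))) by ring.
  eapply Rle_trans; [apply Cmod_triangle|]. lra.
Qed.

End StrongClosure.

Section MergeFacts.
Context {A : BanachAlgebra}.

Lemma merge1_ccons (e : A) a : merge 1 (ccons e a) = upd a 0 (ba_mul e (a 0%nat)).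
Proof. apply functional_extensionality; intros [|i]; reflexivity. Qed.

Lemma mergeS_ccons (e : A) a k : (1 <= k)%nat -> merge (S k) (ccons e a) = ccons e (merge k a).
Proof.
  intros Hk. apply functional_extensionality; intros [|i]; unfold merge; simpl.
  - destruct k; [lia|]. reflexivity.
  - replace (k - 0)%nat with k by lia.
    natcase; try (destruct k; [lia|]); simpl in *; natcase.
Qed.

Lemma merge_upd_last m k (a : nat -> A) e : (1 <= k <= m)%nat ->
  forall i, (i < S m)%nat -> merge k (upd a (S m) e) i = upd (merge k a) m e i.
Proof. intros Hk i Hi. unfold merge, upd. natcase. Qed.

Lemma merge_upd_top m (a : nat -> A) e :
  forall i, (i < S m)%nat -> merge (S m) (upd a (S m) e) i = upd a m (ba_mul (a m) e) i.
Proof. intros i Hi. unfold merge, upd. replace (S m - 1)%nat with m by lia. natcase. Qed.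

End MergeFacts.

Section OneSidedCocycles.
Context {A : BanachAlgebra} {X : BanachBimodule A}.
Variables (m : nat) (T : Cochain X) (e : A).
Hypothesis HT : cocycle (fun _ => True) (S m) T.

(* The cocycle identity at (e, a_1, ..., a_m): the term <x.e, T(a)> drops out. *)
Lemma delta_ccons : (forall a x c, T a (ract x c) = C0) ->
  forall a x, delta m (fun a x => Cmul (Copp C1) (T (ccons e a) x)) a x
              = T (upd a 0 (ba_mul e (a 0%nat))) x.
Proof.
  destruct HT as [_ Hd]. intros Hz a x.
  pose proof (Hd (ccons e a) x I) as H. unfold delta in H |- *.
  change (shift (ccons e a)) with a in H. simpl ccons in H.
  rewrite Hz in H. rewrite Hz.
  rewrite Csum1_S, merge1_ccons in H.
  rewrite (Csum1_ext (fun k => Cmul (Csign (S k)) (T (merge (S k) (ccons e a)) x))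
             (fun k => Cmul (Copp C1) (Cmul (Csign k) (T (ccons e (merge k a)) x)))) in H.
  2:{ intros k Hk. rewrite mergeS_ccons by lia. rewrite CsignS. ring. }
  rewrite Csum1_scal in H.
  rewrite (Csum1_ext (fun k => Cmul (Csign k) (Cmul (Copp C1) (T (ccons e (merge k a)) x)))
             (fun k => Cmul (Copp C1) (Cmul (Csign k) (T (ccons e (merge k a)) x)))) by (intros; ring).
  rewrite Csum1_scal, !CsignS, Csign0 in *.
  set (Sg := Csum1 (fun k => Cmul (Csign k) (T (ccons e (merge k a)) x)) m) in *.
  set (u := T (upd a 0 (ba_mul e (a 0%nat))) x) in *.
  set (l := T (ccons e a) (lact (a m) x)) in *.
  transitivity (Cadd (Cadd (Cadd C0 (Cadd (Cmul (Copp C1) u) (Cmul (Copp C1) Sg)))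
                           (Cmul (Copp (Copp (Csign m))) l)) u); [ring|].
  rewrite H. ring.
Qed.

(* The cocycle identity at (a_1, ..., a_m, e): the term <e.x, T(a)> drops out. *)
Lemma delta_upd_last : (forall a x c, T a (lact c x) = C0) ->
  forall a x, delta m (fun a x => Cmul (Copp (Csign (S m))) (T (upd a m e) x)) a x
              = T (upd a m (ba_mul (a m) e)) x.
Proof.
  destruct HT as [[H1 _] Hd]. intros Hz a x.
  pose proof (Hd (upd a (S m) e) x I) as H. unfold delta in H |- *.
  rewrite Hz in H. rewrite Hz.
  change (upd a (S m) e 0%nat) with (a 0%nat) in H.
  change (shift (upd a (S m) e)) with (upd (shift a) m e) in H.
  change (Csum1 (fun k => Cmul (Csign k) (T (merge k (upd a (S m) e)) x)) (S m)) with
    (Cadd (Csum1 (fun k => Cmul (Csign k) (T (merge k (upd a (S m) e)) x)) m)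
          (Cmul (Csign (S m)) (T (merge (S m) (upd a (S m) e)) x))) in H.
  rewrite (Csum1_ext (fun k => Cmul (Csign k) (T (merge k (upd a (S m) e)) x))
            (fun k => Cmul (Csign k) (T (upd (merge k a) m e) x))) in H.
  2:{ intros k Hk. f_equal. apply H1; auto. intros i Hi. apply merge_upd_last; auto. }
  rewrite (H1 (merge (S m) (upd a (S m) e)) (upd a m (ba_mul (a m) e))) in H
    by (auto; apply merge_upd_top).
  rewrite (Csum1_ext (fun k => Cmul (Csign k) (Cmul (Copp (Csign (S m))) (T (upd (merge k a) m e) x)))
             (fun k => Cmul (Copp (Csign (S m))) (Cmul (Csign k) (T (upd (merge k a) m e) x))))
    by (intros; ring).
  rewrite Csum1_scal.
  pose proof (Csign_sqr (S m)) as Hs.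
  set (s := Csign (S m)) in *.
  set (Sg := Csum1 (fun k => Cmul (Csign k) (T (upd (merge k a) m e) x)) m) in *.
  set (u := T (upd a m (ba_mul (a m) e)) x) in *.
  set (t0 := T (upd (shift a) m e) (ract x (a 0%nat))) in *.
  transitivity (Cadd (Cmul (Copp s) (Cadd (Cadd t0 (Cadd Sg (Cmul s u))) (Cmul (Csign (S (S m))) C0)))
                     (Cmul (Cmul s s) u)); [ring|].
  rewrite H, Hs. ring.
Qed.

End OneSidedCocycles.

Section ApproximateIdentity.
Context {A : BanachAlgebra} {X : BanachBimodule A}.
Variables (I : Type) (le : I -> I -> Prop) (e : I -> A) (Ke : R).
Hypothesis Hdir : directed I le.
Hypothesis HKe : 0 <= Ke.
Hypothesis HeK : forall i, bs_norm (e i) <= Ke.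
Hypothesis Hbai_l : forall a, net_null le (fun i => bs_norm (bs_sub (ba_mul (e i) a) a)).
Hypothesis Hbai_r : forall a, net_null le (fun i => bs_norm (bs_sub (ba_mul a (e i)) a)).

Lemma cochain_upd_strong_cvg n (T : Cochain X) j (w : I -> A) (a : nat -> A) :
  is_cochain (fun _ => True) n T -> (j < n)%nat ->
  net_null le (fun i => bs_norm (bs_sub (w i) (a j))) ->
  forall eps, eps > 0 -> exists i0, forall i, le i0 i -> forall x : X,
    Cmod (Csub (T (upd a j (w i)) x) (T a x)) <= eps * bs_norm x.
Proof.
  intros HT Hj Hw eps Heps.
  pose proof HT as [_ [_ [_ [K [HK Hb]]]]].
  destruct (prod_norm_upd a n j Hj) as [Q [HQ HQe]].
  assert (Hp : 0 < eps / (K * Q + 1)) by (apply Rdiv_lt_0_compat; nra).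
  destruct (Hw _ Hp) as [i0 Hi0]. exists i0. intros i Hi x.
  rewrite (cochain_upd_split _ n T j a (a j) (w i) x HT Hj Logic.I), upd_id.
  replace (Csub (Cadd (T a x) (T (upd a j (bs_sub (w i) (a j))) x)) (T a x))
    with (T (upd a j (bs_sub (w i) (a j))) x) by ring.
  eapply Rle_trans; [apply Hb; auto|]. rewrite HQe.
  specialize (Hi0 i Hi). pose proof (bs_norm_ge0 _ x).
  pose proof (bs_norm_ge0 _ (bs_sub (w i) (a j))).
  assert (K * (Q * bs_norm (bs_sub (w i) (a j))) <= eps).
  { apply Rle_trans with ((K * Q + 1) * (eps / (K * Q + 1))).
    - assert (0 <= K * Q) by nra. nra.
    - right. field. nra. }
  nra.
Qed.

Lemma ba_normM_e_l i u : bs_norm (ba_mul (e i) u) <= Ke * bs_norm u.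
Proof.
  eapply Rle_trans; [apply ba_normM|].
  pose proof (bs_norm_ge0 _ u). specialize (HeK i). nra.
Qed.

Lemma ba_normM_e_r i u : bs_norm (ba_mul u (e i)) <= Ke * bs_norm u.
Proof.
  eapply Rle_trans; [apply ba_normM|].
  pose proof (bs_norm_ge0 _ u). specialize (HeK i). nra.
Qed.

(* [T] is the strong limit of the coboundaries [delta (- T (e_i, .))] = [T (e_i a_1, ...)]. *)
Lemma strong_closure_B_ract_vanishing m (T : Cochain X) :
  cocycle (fun _ => True) (S m) T -> (forall a x c, T a (ract x c) = C0) ->
  strong_closure_B (fun _ => True) (S m) T.
Proof.
  intros HTcc Hz. pose proof HTcc as [HT _].
  split; auto.
  exists I, le, (fun i a x => T (upd a 0 (ba_mul (e i) (a 0%nat))) x).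
  split; auto. split.
  - intros i. split.
    + apply (is_cochain_upd_map _ (S m) T 0 (ba_mul (e i)) Ke HT); [lia|exact HKe| |apply ba_normM_e_l].
      intros c u v. rewrite ba_mulDr, ba_mulZr. reflexivity.
    + exists (fun a x => Cmul (Copp C1) (T (ccons (e i) a) x)). split.
      * apply is_cochain_scal, is_cochain_ccons; auto.
      * intros a x _. apply delta_ccons; auto.
  - intros a eps Heps.
    destruct (cochain_upd_strong_cvg (S m) T 0 (fun i => ba_mul (e i) (a 0%nat)) a HT
                ltac:(lia) (Hbai_l (a 0%nat)) eps Heps) as [i0 Hi0].
    exists i0. intros i Hi x _. apply Hi0; auto.
Qed.

Lemma strong_closure_B_lact_vanishing m (T : Cochain X) :
  cocycle (fun _ => True) (S m) T -> (forall a x c, T a (lact c x) = C0) ->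
  strong_closure_B (fun _ => True) (S m) T.
Proof.
  intros HTcc Hz. pose proof HTcc as [HT _].
  split; auto.
  exists I, le, (fun i a x => T (upd a m (ba_mul (a m) (e i))) x).
  split; auto. split.
  - intros i. split.
    + apply (is_cochain_upd_map _ (S m) T m (fun u => ba_mul u (e i)) Ke HT);
        [lia|exact HKe| |apply ba_normM_e_r].
      intros c u v. rewrite ba_mulDl, ba_mulZl. reflexivity.
    + exists (fun a x => Cmul (Copp (Csign (S m))) (T (upd a m (e i)) x)). split.
      * apply is_cochain_scal, is_cochain_upd_last; auto.
      * intros a x _. apply delta_upd_last; auto.
  - intros a eps Heps.
    destruct (cochain_upd_strong_cvg (S m) T m (fun i => ba_mul (a m) (e i)) a HT
                ltac:(lia) (Hbai_r (a m)) eps Heps) as [i0 Hi0].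
    exists i0. intros i Hi x _. apply Hi0; auto.
Qed.

End ApproximateIdentity.

Section PrecompositionLimit.
Context {I : Type} {le : I -> I -> Prop} (U : ultranet le).
Context {A : BanachAlgebra} {X : BanachBimodule A}.
Variable P : X -> Prop.
Hypothesis HP : is_submodule P.
Variable g : I -> X -> X.
Variable M : R.
Hypothesis HM : 0 <= M.
Hypothesis g_lin : forall j c x y,
  g j (bs_add (bs_scal c x) y) = bs_add (bs_scal c (g j x)) (g j y).
Hypothesis g_bounded : forall j x, bs_norm (g j x) <= M * bs_norm x.
Hypothesis g_P : forall j x, P (g j x).
Hypothesis g_ract : forall x c,
  net_null le (fun j => bs_norm (bs_sub (ract (g j x) c) (g j (ract x c)))).
Hypothesis g_lact : forall x c,
  net_null le (fun j => bs_norm (bs_sub (lact c (g j x)) (g j (lact c x)))).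

Definition ulim_precomp (T : Cochain X) : Cochain X :=
  fun a x => ulim U (fun j => T a (g j x)).

Lemma ulim_precomp_ucvg n T a x :
  is_cochain P n T -> ucvg U (fun j => T a (g j x)) (ulim_precomp T a x).
Proof.
  intros [_ [_ [_ [K [HK Hb]]]]]. apply (ulim_ucvg U _ (K * prod_norm a n * (M * bs_norm x))).
  intros j. eapply Rle_trans; [apply Hb; auto|]. apply Rmult_le_compat_l; auto.
  pose proof (prod_norm_ge0 a n); nra.
Qed.

Lemma ulim_precomp_cochain n T : is_cochain P n T -> is_cochain (fun _ => True) n (ulim_precomp T).
Proof.
  intros HT. pose proof HT as [H1 [H2 [H3 [K [HK H4]]]]].
  split; [|split; [|split]].
  - intros a b Hab x _. unfold ulim_precomp. f_equal. apply functional_extensionality; intros j.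
    apply H1; auto.
  - intros a c x y _ _. apply ulim_eq.
    apply (ucvg_ext U (fun j => Cadd (Cmul c (T a (g j x))) (T a (g j y)))).
    + intros j. rewrite g_lin, H2; auto.
    + apply ucvg_add; [apply ucvg_scal|]; apply (ulim_precomp_ucvg n); auto.
  - intros i Hi a c u v x _. apply ulim_eq.
    apply (ucvg_ext U (fun j => Cadd (Cmul c (T (upd a i u) (g j x))) (T (upd a i v) (g j x)))).
    + intros j. rewrite H3; auto.
    + apply ucvg_add; [apply ucvg_scal|]; apply (ulim_precomp_ucvg n); auto.
  - exists (K * M). split; [nra|]. intros a x _.
    apply (ucvg_Cmod_le U (fun j => T a (g j x))); [apply (ulim_precomp_ucvg n); auto|].
    intros j. eapply Rle_trans; [apply H4; auto|].
    pose proof (prod_norm_ge0 a n). pose proof (bs_norm_ge0 _ x). pose proof (g_bounded j x).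
    assert (0 <= K * prod_norm a n) by nra.
    apply Rle_trans with (K * prod_norm a n * (M * bs_norm x)); [apply Rmult_le_compat_l; auto|nra].
Qed.

Lemma ulim_precomp_delta n T a x :
  is_cochain P n T -> delta n (ulim_precomp T) a x = ulim_precomp (delta n T) a x.
Proof.
  intros HT. symmetry. apply ulim_eq. destruct HP as [_ [_ [HPl HPr]]].
  unfold delta. apply ucvg_add; [apply ucvg_add|].
  - apply (ucvg_net_null U (fun j => T (shift a) (g j (ract x (a O))))).
    + apply (ulim_precomp_ucvg n); auto.
    + apply (cochain_net_null P HP le n); auto.
  - apply (ucvg_Csum1 U (fun k j => Cmul (Csign k) (T (merge k a) (g j x)))).
    intros k. apply ucvg_scal. apply (ulim_precomp_ucvg n); auto.
  - apply ucvg_scal. apply (ucvg_net_null U (fun j => T a (g j (lact (a n) x)))).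
    + apply (ulim_precomp_ucvg n); auto.
    + apply (cochain_net_null P HP le n); auto.
Qed.

Lemma ulim_precomp_cocycle n T : cocycle P n T -> cocycle (fun _ => True) n (ulim_precomp T).
Proof.
  intros [HT Hd]. split; [apply (ulim_precomp_cochain n); auto|].
  intros a x _. rewrite (ulim_precomp_delta n) by auto. unfold ulim_precomp.
  transitivity (ulim U (fun _ => C0)).
  - f_equal. apply functional_extensionality; intros j. apply Hd; auto.
  - apply ulim_eq, ucvg_const.
Qed.

Lemma ulim_precomp_dist n T S eps a x :
  is_cochain P n T -> is_cochain P n S -> 0 <= eps ->
  (forall y, P y -> Cmod (Csub (S a y) (T a y)) <= eps * bs_norm y) ->
  Cmod (Csub (ulim_precomp S a x) (ulim_precomp T a x)) <= eps * M * bs_norm x.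
Proof.
  intros HT HS He Hy.
  apply (ucvg_Cmod_le U (fun j => Csub (S a (g j x)) (T a (g j x)))).
  - apply (ucvg_ext U (fun j => Cadd (Cmul C1 (S a (g j x))) (Cmul (Copp C1) (T a (g j x))))).
    + intros j; unfold Csub; ring.
    + replace (Csub (ulim_precomp S a x) (ulim_precomp T a x))
        with (Cadd (Cmul C1 (ulim_precomp S a x)) (Cmul (Copp C1) (ulim_precomp T a x)))
        by (unfold Csub; ring).
      apply ucvg_add; apply ucvg_scal; apply (ulim_precomp_ucvg n); auto.
  - intros j. eapply Rle_trans; [apply Hy; auto|].
    pose proof (g_bounded j x). pose proof (bs_norm_ge0 _ x). nra.
Qed.

Lemma ulim_precomp_strong_closure_B n T :
  strong_closure_B P n T -> strong_closure_B (fun _ => True) n (ulim_precomp T).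
Proof.
  intros [HT [J [leJ [F [HdirJ [HF Hc]]]]]].
  split; [apply (ulim_precomp_cochain n); auto|].
  exists J, leJ, (fun i => ulim_precomp (F i)). split; auto. split.
  - intros i. destruct (HF i) as [HFi [R [HR HdR]]].
    split; [apply (ulim_precomp_cochain n); auto|].
    exists (ulim_precomp R). split; [apply (ulim_precomp_cochain (pred n)); auto|].
    intros a x _. rewrite (ulim_precomp_delta (pred n)) by auto. unfold ulim_precomp. f_equal.
    apply functional_extensionality; intros j. apply HdR, g_P.
  - intros a eps Heps.
    assert (Hp : 0 < eps / (M + 1)) by (apply Rdiv_lt_0_compat; lra).
    destruct (Hc a _ Hp) as [i0 Hi0]. exists i0. intros i Hi x _.
    destruct (HF i) as [HFi _].
    eapply Rle_trans; [apply (ulim_precomp_dist n); auto; lra|].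
    pose proof (bs_norm_ge0 _ x). apply Rmult_le_compat_r; auto.
    apply Rle_trans with (eps / (M + 1) * (M + 1)); [apply Rmult_le_compat_l; lra|].
    right; field; lra.
Qed.

End PrecompositionLimit.

Lemma cochain_vanish_X1 {A : BanachAlgebra} {X : BanachBimodule A} n (D : Cochain X) :
  is_cochain (X1 X) n D -> (forall a b c w, D a (lact b (ract w c)) = C0) ->
  forall a y, X1 X y -> D a y = C0.
Proof.
  intros HD Hprod a.
  assert (Hspan : forall z, in_span (bimod_products (X := X)) z -> D a z = C0).
  { induction 1 as [|z [b [c [w ->]]]|c z1 z2 Hz1 IH1 Hz2 IH2].
    - apply (cochain0 _ (X1_submodule X) n D a HD).
    - apply Hprod.
    - pose proof HD as [_ [H2 _]].
      rewrite H2 by (apply closed_span_span; auto). rewrite IH1, IH2. ring. }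
  intros y Hy. destruct (cochain_lipschitz _ (X1_submodule X) n D HD) as [K [HK Hb]].
  apply Cmod_eq0. intros eps Heps. pose proof (prod_norm_ge0 a n).
  assert (Hp : 0 < eps / (K * prod_norm a n + 1)) by (apply Rdiv_lt_0_compat; nra).
  destruct (Hy _ Hp) as [z [Hz Nz]].
  specialize (Hb a y z Hy (closed_span_span _ z Hz)). rewrite (Hspan z Hz) in Hb.
  replace (Csub (D a y) C0) with (D a y) in Hb by ring.
  eapply Rle_trans; [apply Hb|].
  apply Rle_trans with ((K * prod_norm a n + 1) * (eps / (K * prod_norm a n + 1))).
  - assert (0 <= K * prod_norm a n) by nra. pose proof (bs_norm_ge0 _ (bs_sub y z)). nra.
  - right. field. nra.
Qed.

Section EssentialPart.
Context {A : BanachAlgebra} {X : BanachBimodule A}.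
Variables (I : Type) (le : I -> I -> Prop) (e : I -> A) (Ke Kact : R).
Hypothesis Hdir : directed I le.
Hypothesis HKe : 0 <= Ke.
Hypothesis HeK : forall i, bs_norm (e i) <= Ke.
Hypothesis Hbai_l : forall a, net_null le (fun i => bs_norm (bs_sub (ba_mul (e i) a) a)).
Hypothesis Hbai_r : forall a, net_null le (fun i => bs_norm (bs_sub (ba_mul a (e i)) a)).
Hypothesis HKact : 0 <= Kact.
Hypothesis Hlact : forall a (x : X), bs_norm (lact a x) <= Kact * bs_norm a * bs_norm x.
Hypothesis Hract : forall a (x : X), bs_norm (ract x a) <= Kact * bs_norm a * bs_norm x.
Variable U : ultranet le.

Lemma lact_ract_norm_le u (x : X) v :
  bs_norm (lact u (ract x v)) <= Kact * Kact * (bs_norm u * bs_norm x * bs_norm v).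
Proof.
  eapply Rle_trans; [apply Hlact|]. pose proof (Hract v x).
  pose proof (bs_norm_ge0 _ u). pose proof (bs_norm_ge0 _ x). pose proof (bs_norm_ge0 _ v).
  assert (0 <= Kact * bs_norm u) by nra. nra.
Qed.

Lemma lact_e_ract_norm_le j (x : X) v :
  bs_norm (lact (e j) (ract x v)) <= Kact * Kact * Ke * (bs_norm x * bs_norm v).
Proof.
  eapply Rle_trans; [apply lact_ract_norm_le|].
  pose proof (HeK j). pose proof (bs_norm_ge0 _ x). pose proof (bs_norm_ge0 _ v).
  assert (0 <= Kact * Kact * (bs_norm x * bs_norm v)) by (apply Rmult_le_pos; nra). nra.
Qed.

Lemma lact_ract_e_norm_le u (x : X) j :
  bs_norm (lact u (ract x (e j))) <= Kact * Kact * Ke * (bs_norm u * bs_norm x).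
Proof.
  eapply Rle_trans; [apply lact_ract_norm_le|].
  pose proof (HeK j). pose proof (bs_norm_ge0 _ x). pose proof (bs_norm_ge0 _ u).
  assert (0 <= Kact * Kact * (bs_norm u * bs_norm x)) by (apply Rmult_le_pos; nra). nra.
Qed.

Lemma commutator_null c :
  net_null le (fun j => bs_norm (bs_sub (ba_mul (e j) c) (ba_mul c (e j)))).
Proof.
  apply (net_null_le le 1 (net_null_add le _ _ Hdir (Hbai_l c) (Hbai_r c))); [lra|].
  intros j. rewrite Rmult_1_l, (bs_norm_subC _ (ba_mul c (e j)) c).
  apply bs_norm_sub_triangle.
Qed.

Definition act_right (j : I) (x : X) : X := ract x (e j).
Definition act_both (j : I) (x : X) : X := lact (e j) (ract x (e j)).

Lemma act_right_lin j c x y :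
  act_right j (bs_add (bs_scal c x) y) = bs_add (bs_scal c (act_right j x)) (act_right j y).
Proof. unfold act_right. rewrite ract_Dl, ract_Zl. reflexivity. Qed.

Lemma act_both_lin j c x y :
  act_both j (bs_add (bs_scal c x) y) = bs_add (bs_scal c (act_both j x)) (act_both j y).
Proof. unfold act_both. rewrite ract_Dl, ract_Zl, lact_Dr, lact_Zr. reflexivity. Qed.

Lemma act_right_bounded j x : bs_norm (act_right j x) <= Kact * Ke * bs_norm x.
Proof.
  eapply Rle_trans; [apply Hract|]. pose proof (HeK j). pose proof (bs_norm_ge0 _ x).
  assert (0 <= Kact * bs_norm x) by nra. nra.
Qed.

Lemma act_both_bounded j x : bs_norm (act_both j x) <= Kact * Kact * Ke * Ke * bs_norm x.
Proof.
  eapply Rle_trans; [apply lact_e_ract_norm_le|]. pose proof (HeK j).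
  pose proof (bs_norm_ge0 _ x). assert (0 <= Kact * Kact * Ke * bs_norm x) by
    (repeat apply Rmult_le_pos; auto; nra). nra.
Qed.

Lemma act_right_ract x c :
  net_null le (fun j => bs_norm (bs_sub (ract (act_right j x) c) (act_right j (ract x c)))).
Proof.
  apply (net_null_le le (Kact * bs_norm x) (commutator_null c));
    [pose proof (bs_norm_ge0 _ x); nra|].
  intros j. unfold act_right. rewrite <- !ract_M, <- ract_subr.
  eapply Rle_trans; [apply Hract|]. lra.
Qed.

Lemma act_right_lact x c :
  net_null le (fun j => bs_norm (bs_sub (lact c (act_right j x)) (act_right j (lact c x)))).
Proof.
  intros eps Heps. destruct Hdir as [[j0] _]. exists j0. intros j _. unfold act_right.
  rewrite lract, bs_subrr, bs_norm0. lra.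
Qed.

Lemma act_both_ract x c :
  net_null le (fun j => bs_norm (bs_sub (ract (act_both j x) c) (act_both j (ract x c)))).
Proof.
  apply (net_null_le le (Kact * Kact * Ke * bs_norm x) (commutator_null c));
    [pose proof (bs_norm_ge0 _ x); repeat apply Rmult_le_pos; auto; nra|].
  intros j. unfold act_both. rewrite lract, <- !ract_M, <- lact_subr, <- ract_subr.
  eapply Rle_trans; [apply lact_e_ract_norm_le|]. right; ring.
Qed.

Lemma act_both_lact x c :
  net_null le (fun j => bs_norm (bs_sub (lact c (act_both j x)) (act_both j (lact c x)))).
Proof.
  apply (net_null_le le (Kact * Kact * Ke * bs_norm x) (commutator_null c));
    [pose proof (bs_norm_ge0 _ x); repeat apply Rmult_le_pos; auto; nra|].
  intros j. unfold act_both. rewrite lract, <- !lact_M, <- lact_subl.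
  rewrite (bs_norm_subC _ (ba_mul (e j) c)).
  eapply Rle_trans; [apply lact_ract_e_norm_le|]. right; ring.
Qed.

Definition lim_right : Cochain X -> Cochain X := ulim_precomp U act_right.
Definition lim_both : Cochain X -> Cochain X := ulim_precomp U act_both.

Lemma lim_right_cocycle n T : cocycle (fun _ => True) n T -> cocycle (fun _ => True) n (lim_right T).
Proof.
  apply (ulim_precomp_cocycle U _ (is_submodule_True (X := X)) act_right (Kact * Ke) ltac:(nra)
           act_right_lin act_right_bounded (fun _ _ => Logic.I) act_right_ract act_right_lact).
Qed.

Lemma lim_both_cocycle n T : cocycle (X1 X) n T -> cocycle (fun _ => True) n (lim_both T).
Proof.
  apply (ulim_precomp_cocycle U _ (X1_submodule X) act_both (Kact * Kact * Ke * Ke) ltac:(repeat apply Rmult_le_pos; auto)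
           act_both_lin act_both_bounded (fun _ _ => X1_product _ _ _) act_both_ract act_both_lact).
Qed.

Lemma lim_right_ract n T a x c :
  is_cochain (fun _ => True) n T -> lim_right T a (ract x c) = T a (ract x c).
Proof.
  intros HT. apply ulim_eq, (ucvg_net_null U _ _ _ (ucvg_const U _)).
  apply (cochain_net_null (fun _ => True) is_submodule_True le n); auto.
  apply (net_null_le le (Kact * bs_norm x) (Hbai_r c)); [pose proof (bs_norm_ge0 _ x); nra|].
  intros j. unfold act_right. rewrite <- ract_M, <- ract_subr.
  eapply Rle_trans; [apply Hract|]. lra.
Qed.

Lemma lim_both_lact n T a x c :
  is_cochain (fun _ => True) n T -> lim_both T a (lact c x) = lim_right T a (lact c x).
Proof.
  intros HT. apply ulim_eq.
  apply (ucvg_net_null U (fun j => T a (act_right j (lact c x)))).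
  { apply (ulim_precomp_ucvg U (fun _ => True) act_right _ act_right_bounded (fun _ _ => Logic.I) n); auto. }
  apply (cochain_net_null (fun _ => True) is_submodule_True le n); auto.
  apply (net_null_le le (Kact * Kact * Ke * bs_norm x) (Hbai_l c));
    [pose proof (bs_norm_ge0 _ x); repeat apply Rmult_le_pos; auto; nra|].
  intros j. unfold act_both, act_right. rewrite lract, <- lact_M, <- lact_subl.
  eapply Rle_trans; [apply lact_ract_e_norm_le|]. right; ring.
Qed.

Lemma lim_both_product n S a b c w :
  is_cochain (X1 X) n S -> lim_both S a (lact b (ract w c)) = S a (lact b (ract w c)).
Proof.
  intros HS. apply ulim_eq, (ucvg_net_null U _ _ _ (ucvg_const U _)).
  apply (cochain_net_null _ (X1_submodule X) le n); auto; [intros; apply X1_product|intros; apply X1_product|].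
  (* e_j b w c e_j - b w c = (e_j b - b) w c e_j + b w (c e_j - c) *)
  set (r1 := fun j => bs_norm (bs_sub (ba_mul (e j) b) b)).
  set (r2 := fun j => bs_norm (bs_sub (ba_mul c (e j)) c)).
  set (K1 := Kact * Kact * (bs_norm w * (bs_norm c * Ke))).
  set (K2 := Kact * Kact * (bs_norm b * bs_norm w)).
  pose proof (bs_norm_ge0 _ w). pose proof (bs_norm_ge0 _ c). pose proof (bs_norm_ge0 _ b).
  assert (HK1 : 0 <= K1) by (unfold K1; repeat apply Rmult_le_pos; auto; nra).
  assert (HK2 : 0 <= K2) by (unfold K2; repeat apply Rmult_le_pos; auto; nra).
  apply (net_null_le le 1 (net_null_add le _ _ Hdir (net_null_le le K1 (Hbai_l b) HK1 (fun _ => Rle_refl _))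
                                                    (net_null_le le K2 (Hbai_r c) HK2 (fun _ => Rle_refl _))));
    [lra|].
  intros j. rewrite Rmult_1_l. unfold act_both.
  rewrite lract, <- lact_M, <- ract_M.
  rewrite <- (bs_subKC _ _ (lact b (ract w (ba_mul c (e j))))), <- lact_subl, <- lact_subr, <- ract_subr.
  eapply Rle_trans; [apply bs_normD|]. apply Rplus_le_compat.
  - eapply Rle_trans; [apply lact_ract_norm_le|]. unfold K1, r1.
    pose proof (ba_normM_e_r I e Ke HeK j c) as Hce.
    pose proof (bs_norm_ge0 _ (bs_sub (ba_mul (e j) b) b)).
    assert (0 <= Kact * Kact * (bs_norm (bs_sub (ba_mul (e j) b) b) * bs_norm w)) by
      (apply Rmult_le_pos; nra).
    nra.
  - eapply Rle_trans; [apply lact_ract_norm_le|]. unfold K2, r2. right; ring.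
Qed.

Lemma strong_closure_B_of_X1 m T :
  cocycle (fun _ => True) (S m) T -> strong_closure_B (X1 X) (S m) T ->
  strong_closure_B (fun _ => True) (S m) T.
Proof.
  intros HT HB. pose proof HT as [HTc _].
  pose proof (lim_right_cocycle _ _ HT) as Hright.
  pose proof (lim_both_cocycle _ _ (cocycle_weaken _ (X1 X) _ _ (fun _ _ => Logic.I) HT)) as Hboth.
  set (D1 := fun a x => Cadd (Cmul (Copp C1) (lim_right T a x)) (T a x)).
  set (D2 := fun a x => Cadd (Cmul (Copp C1) (lim_both T a x)) (lim_right T a x)).
  assert (B1 : strong_closure_B (fun _ => True) (S m) D1).
  { apply (strong_closure_B_ract_vanishing I le e Ke Hdir HKe HeK Hbai_l m D1
             (cocycle_lin _ _ _ _ _ Hright HT)).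
    intros a x c. unfold D1. rewrite (lim_right_ract (S m)) by auto. ring. }
  assert (B2 : strong_closure_B (fun _ => True) (S m) D2).
  { apply (strong_closure_B_lact_vanishing I le e Ke Hdir HKe HeK Hbai_r m D2
             (cocycle_lin _ _ _ _ _ Hboth Hright)).
    intros a x c. unfold D2. rewrite (lim_both_lact (S m)) by auto. ring. }
  assert (B3 : strong_closure_B (fun _ => True) (S m) (lim_both T)).
  { apply (ulim_precomp_strong_closure_B U _ (X1_submodule X) act_both (Kact * Kact * Ke * Ke) ltac:(repeat apply Rmult_le_pos; auto)
             act_both_lin act_both_bounded (fun _ _ => X1_product _ _ _) act_both_ract act_both_lact); auto. }
  apply (strong_closure_B_ext _ is_submodule_True (S m) (cadd (cadd D1 D2) (lim_both T))).
  - intros a x _. unfold cadd, D1, D2. ring.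
  - apply strong_closure_B_add; [exact is_submodule_True| |exact B3].
    apply strong_closure_B_add; auto. exact is_submodule_True.
Qed.

Lemma lim_both_extends m T : cocycle (X1 X) (S m) T ->
  cocycle (fun _ => True) (S m) (lim_both T) /\ strong_closure_B (X1 X) (S m) (csub (lim_both T) T).
Proof.
  intros HT. pose proof HT as [HTc _].
  pose proof (lim_both_cocycle _ _ HT) as Hboth.
  split; [exact Hboth|]. destruct Hboth as [Hboth _].
  assert (HD : is_cochain (X1 X) (S m) (csub (lim_both T) T)).
  { apply (is_cochain_ext _ (X1_submodule X) (S m)
             (fun a x => Cadd (Cmul (Copp C1) (T a x)) (lim_both T a x))).
    - intros; unfold csub, Csub; ring.
    - apply is_cochain_lin; auto. apply (is_cochain_weaken (fun _ => True)); auto. }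
  apply strong_closure_B_vanishing; auto.
  apply (cochain_vanish_X1 (S m)); auto.
  intros a b c w. unfold csub. rewrite (lim_both_product (S m)) by auto. ring.
Qed.

End EssentialPart.

Lemma has_bai_net_null (A : BanachAlgebra) : has_bai A ->
  exists (I : Type) (le : I -> I -> Prop) (e : I -> A) (Ke : R),
    directed I le /\ 0 <= Ke /\ (forall i, bs_norm (e i) <= Ke) /\
    (forall a, net_null le (fun i => bs_norm (bs_sub (ba_mul (e i) a) a))) /\
    (forall a, net_null le (fun i => bs_norm (bs_sub (ba_mul a (e i)) a))).
Proof.
  intros [I [le [e [Ke [Hdir [HeK Hbai]]]]]]. exists I, le, e, Ke.
  split; [auto|]. split.
  { destruct Hdir as [[i0] _]. pose proof (HeK i0). pose proof (bs_norm_ge0 _ (e i0)). lra. }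
  split; [auto|]. split.
  - intros a eps Heps. destruct (Hbai a eps Heps) as [i0 Hi0]. exists i0. apply Hi0.
  - intros a eps Heps. destruct (Hbai a eps Heps) as [i0 Hi0]. exists i0. apply Hi0.
Qed.

Theorem corollary3p6 (A : BanachAlgebra) (X : BanachBimodule A)
  (hbai : has_bai A) (n : nat) (hn : (1 <= n)%nat) :
  Happ_iso (X := X) (fun _ => True) (X1 X) n.
Proof.
  destruct n as [|m]; [lia|].
  destruct (has_bai_net_null A hbai) as [I [le [e [Ke [Hdir [HKe [HeK [Hbai_l Hbai_r]]]]]]]].
  destruct (act_bounded A X) as [Kact [HKact Hact]].
  pose proof (fun a x => proj1 (Hact a x)) as Hlact.
  pose proof (fun a x => proj2 (Hact a x)) as Hract.
  destruct (UltranetExistence.ultranet_exists le Hdir) as [U].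
  (* The isomorphism is restriction of cochains from [X] to [X1]. *)
  exists (fun T => T). split; [|split; [|split; [|split]]].
  - intros T. apply cocycle_weaken; auto.
  - intros T T' _ _ E a x _. apply E; auto.
  - reflexivity.
  - intros T HT. split.
    + apply strong_closure_B_weaken; auto.
    + apply (strong_closure_B_of_X1 I le e Ke Kact Hdir HKe HeK Hbai_l Hbai_r HKact
               Hlact Hract U); auto.
  - intros T HT. exists (lim_both I le e U T).
    apply (lim_both_extends I le e Ke Kact Hdir HKe HeK Hbai_l Hbai_r HKact Hlact Hract U); auto.
Qed.
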